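(* Consider a market with $M$ consumers $\mathcal{M}=\{1,\dots,M\}$ and $N$ suppliers $\mathcal{N}=\{1,\dots,N\}$, constants $d_0>0$, $\kappa_0>0$ with $Md_0<N\kappa_0$. Assume: for each $i\in\mathcal{M}$, $U_i$ is concave, strictly increasing and continuously differentiable on $[d_0,\infty)$ with $U_i(d_0)=0$; for each $i\in\mathcal{N}$, $C_i:\mathbb{R}\to\mathbb{R}$ is convex, strictly increasing and continuously differentiable with $C_i(s)\ge 0$ for $s\ge 0$ and $C_i(s)=0$ for $s\le 0$. For $\theta\ge 0$ and $p>0$ let $D(\theta,p)=d_0+\theta/p$ and $S(\theta,p)=\kappa_0-\theta/p$. For a price $\mu>0$ define the price-taking payoffs $$\pi_d^i(\theta_d^i,\mu)=U_i(D(\theta_d^i,\mu))-\mu D(\theta_d^i,\mu),\ i\in\mathcal{M},\qquad \pi_s^i(\theta_s^i,\mu)=\mu S(\theta_s^i,\mu)-C_i(S(\theta_s^i,\mu)),\ i\in\mathcal{N}.$$ Then there exist $\boldsymbol{\theta}_d^*=(\theta_d^{1*},\dots,\theta_d^{M*})\in\mathbb{R}_+^M$, $\boldsymbol{\theta}_s^*=(\theta_s^{1*},\dots,\theta_s^{N*})\in\mathbb{R}_+^N$ and $\mu>0$ such that (i) $\pi_d^i(\theta_d^{i*},\mu)\ge \pi_d^i(\theta_d^i,\mu)$ for all $\theta_d^i\ge 0$ and all $i\in\mathcal{M}$; (ii) $\pi_s^i(\theta_s^{i*},\mu)\ge \pi_s^i(\theta_s^i,\mu)$ for all $\theta_s^i\ge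 0$ and all $i\in\mathcal{N}$; (iii) $\mu=\dfrac{\sum_{i=1}^M\theta_d^{i*}+\sum_{i=1}^N\theta_s^{i*}}{N\kappa_0-Md_0}$. Moreover, the allocation $d_i^*=D(\theta_d^{i*},\mu)$, $i\in\mathcal{M}$, and $s_i^*=S(\theta_s^{i*},\mu)$, $i\in\mathcal{N}$, is an optimal solution of the welfare maximization problem $$\max_{\mathbf{d},\mathbf{s}}\ \sum_{i=1}^M U_i(d_i)-\sum_{i=1}^N C_i(s_i)\quad\text{s.t.}\quad \sum_{i=1}^M d_i=\sum_{i=1}^N s_i,\ \ 0\le s_i\le\kappa_0\ (i\in\mathcal{N}),\ \ d_i\ge d_0\ (i\in\mathcal{M}).$$
   Context: $d_0$ is the common minimum inelastic demand of each consumer and $\kappa_0$ the common capacity of each supplier. Consumer $i$ submits a scalar $\theta_d^i\ge0$ (demand bid $D(\theta_d^i,p)$) and supplier $i$ submits a scalar $\theta_s^i\ge 0$ (supply offer $S(\theta_s^i,p)$); the stated price in (iii) is the unique $p>0$ equating total demand and total supply. *)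

From Stdlib Require Import Reals.
From Coquelicot Require Import Coquelicot.
Open Scope R_scope.

(* rsum n f = f 0 + ... + f (n-1)  (indices 0..n-1 stand for 1..n). *)
Fixpoint rsum (n : nat) (f : nat -> R) : R :=
  match n with
  | O => 0
  | S k => rsum k f + f k
  end.

Definition Dem (d0 theta p : R) : R := d0 + theta / p.
Definition Sup (k0 theta p : R) : R := k0 - theta / p.

Definition pay_d (d0 : R) (Ui : R -> R) (theta mu : R) : R :=
  Ui (Dem d0 theta mu) - mu * Dem d0 theta mu.
Definition pay_s (k0 : R) (Ci : R -> R) (theta mu : R) : R :=
  mu * Sup k0 theta mu - Ci (Sup k0 theta mu).

Definition concave_on_Ici (f : R -> R) (a : R) : Prop :=
  forall x y t, a <= x -> a <= y -> 0 <= t <= 1 ->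
    t * f x + (1 - t) * f y <= f (t * x + (1 - t) * y).

Definition convex_R (f : R -> R) : Prop :=
  forall x y t, 0 <= t <= 1 ->
    f (t * x + (1 - t) * y) <= t * f x + (1 - t) * f y.

Definition strict_incr_Ici (f : R -> R) (a : R) : Prop :=
  forall x y, a <= x -> x < y -> f x < f y.

Definition C1_on_Ici (f : R -> R) (a : R) : Prop :=
  exists f' : R -> R,
    (forall x, a <= x ->
       filterlim (fun y => (f y - f x) / (y - x))
         (within (fun y => a <= y /\ y <> x) (locally x)) (locally (f' x))) /\
    (forall x, a <= x ->
       filterlim f' (within (fun y => a <= y) (locally x)) (locally (f' x))).

Definition C1_R (f : R -> R) : Prop :=
  exists f' : R -> R,
    (forall x, is_derive f x (f' x)) /\ (forall x, continuous f' x).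

Definition feasible (M N : nat) (d0 k0 : R) (d s : nat -> R) : Prop :=
  rsum M d = rsum N s /\
  (forall i, (i < N)%nat -> 0 <= s i <= k0) /\
  (forall i, (i < M)%nat -> d0 <= d i).

Definition welfare (M N : nat) (U C : nat -> R -> R) (d s : nat -> R) : R :=
  rsum M (fun i => U i (d i)) - rsum N (fun i => C i (s i)).

(* Every agent maximises [mu * x - G x] over an interval with [G] convex: a
   supplier with its cost, and a consumer of [d] as the supplier of [-d] with
   cost [q |-> - U (- q)].  Its best responses to a price [mu] form an interval
   whose endpoints are nondecreasing in [mu], the lower one left-continuous and
   the upper one right-continuous.  So at the supremum of the prices at which the
   smallest best responses still add up to a shortage, the total smallest and
   total largest responses enclose [0], and a convex combination of the two
   profiles clears the market.  Adding up the individual optimality conditions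
   over any feasible allocation shows that the clearing allocation maximises
   welfare. *)

From Stdlib Require Import Reals Lra Lia Classical IndefiniteDescription.
From Coquelicot Require Import Coquelicot.
Open Scope R_scope.

Lemma rsum_ext n f g : (forall i, (i < n)%nat -> f i = g i) -> rsum n f = rsum n g.
Proof.
  induction n as [|n IH]; intros H; simpl; [reflexivity|].
  rewrite IH by (intros; apply H; lia). rewrite H by lia; reflexivity.
Qed.

Lemma rsum_le n f g : (forall i, (i < n)%nat -> f i <= g i) -> rsum n f <= rsum n g.
Proof.
  induction n as [|n IH]; intros H; simpl; [lra|].
  apply Rplus_le_compat; [apply IH; intros; apply H|apply H]; lia.
Qed.

Lemma rsum_plus n f g : rsum n (fun i => f i + g i) = rsum n f + rsum n g.
Proof. induction n as [|n IH]; simpl; [ring|]. rewrite IH; ring. Qed.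

Lemma rsum_minus n f g : rsum n (fun i => f i - g i) = rsum n f - rsum n g.
Proof. induction n as [|n IH]; simpl; [ring|]. rewrite IH; ring. Qed.

Lemma rsum_opp n f : rsum n (fun i => - f i) = - rsum n f.
Proof. induction n as [|n IH]; simpl; [ring|]. rewrite IH; ring. Qed.

Lemma rsum_scal n c f : rsum n (fun i => c * f i) = c * rsum n f.
Proof. induction n as [|n IH]; simpl; [ring|]. rewrite IH; ring. Qed.

Lemma rsum_const n c : rsum n (fun _ => c) = INR n * c.
Proof. induction n as [|n IH]; simpl rsum; [simpl; ring|]. rewrite IH, S_INR; ring. Qed.

Lemma rsum_split M N f : rsum (M + N) f = rsum M f + rsum N (fun j => f (M + j)%nat).
Proof.
  induction N as [|N IH]; simpl; [rewrite Nat.add_0_r; ring|].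
  rewrite Nat.add_succ_r; simpl; rewrite IH; ring.
Qed.

Lemma rsum_le_term n f i : (forall k, (k < n)%nat -> f k <= 0) -> (i < n)%nat ->
  rsum n f <= f i.
Proof.
  induction n as [|n IH]; intros Hf Hi; [lia|]. simpl.
  assert (Hn : f n <= 0) by (apply Hf; lia).
  destruct (Nat.eq_dec i n) as [->|Hin].
  - enough (rsum n f <= 0) by lra.
    apply Rle_trans with (rsum n (fun _ => 0)).
    + apply rsum_le; intros; apply Hf; lia.
    + rewrite rsum_const; lra.
  - enough (rsum n f <= f i) by lra.
    apply IH; [intros; apply Hf|]; lia.
Qed.

Lemma exists_argmax n (f : nat -> R) : (0 < n)%nat ->
  exists i, (i < n)%nat /\ forall k, (k < n)%nat -> f k <= f i.
Proof.
  induction n as [|n IH]; intros Hn; [lia|].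
  destruct (Nat.eq_dec n 0) as [->|Hn0].
  - exists O; split; [lia|]. intros k Hk; replace k with O by lia; lra.
  - destruct IH as [i [Hi Hmax]]; [lia|].
    destruct (Rle_lt_dec (f n) (f i)) as [Hle|Hlt].
    + exists i; split; [lia|]. intros k Hk.
      destruct (Nat.eq_dec k n) as [->|]; [lra|apply Hmax; lia].
    + exists n; split; [lia|]. intros k Hk.
      destruct (Nat.eq_dec k n) as [->|]; [lra|].
      apply Rle_trans with (f i); [apply Hmax; lia|lra].
Qed.

Lemma finite_choice {B : Type} n (P : nat -> B -> Prop) : inhabited B ->
  (forall i, (i < n)%nat -> exists y, P i y) ->
  exists f : nat -> B, forall i, (i < n)%nat -> P i (f i).
Proof.
  intros [y0] H.
  apply functional_choice with (R := fun i y => (i < n)%nat -> P i y).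
  intros i. destruct (Nat.lt_ge_cases i n) as [Hi|Hi].
  - destruct (H i Hi) as [y Hy]; exists y; auto.
  - exists y0; intros; lia.
Qed.

Lemma lub_approx (E : R -> Prop) m y : is_lub E m -> y < m -> exists x, E x /\ y < x.
Proof.
  intros [_ Hleast] Hy. apply NNPP; intros Hno.
  enough (m <= y) by lra.
  apply Hleast; intros x Ex.
  destruct (Rle_lt_dec x y) as [|Hlt]; [assumption|].
  exfalso; apply Hno; eauto.
Qed.

Lemma Lub_Rbar_is_lub (E : R -> Prop) a b : E a -> (forall x, E x -> x <= b) ->
  is_lub E (real (Lub_Rbar E)).
Proof.
  intros Ea Hb. destruct (Lub_Rbar_correct E) as [Hub Hleast].
  destruct (Lub_Rbar E) as [l| |]; simpl.
  - split; [intros x Ex; exact (Hub x Ex)|].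
    intros y Hy; exact (Hleast (Finite y) Hy).
  - destruct (Hleast (Finite b) Hb).
  - destruct (Hub a Ea).
Qed.

Lemma filterlim_rsum {T} {F : (T -> Prop) -> Prop} {FF : Filter F} n
    (f : nat -> T -> R) (l : nat -> R) :
  (forall k, (k < n)%nat -> filterlim (f k) F (locally (l k))) ->
  filterlim (fun t => rsum n (fun k => f k t)) F (locally (rsum n l)).
Proof.
  induction n as [|n IH]; intros Hf; simpl.
  - apply filterlim_const.
  - eapply filterlim_comp_2 with (h := Rplus).
    + apply IH; intros; apply Hf; lia.
    + apply Hf; lia.
    + exact (filterlim_plus (rsum n l) (l n)).
Qed.

Lemma nondecreasing_at_left (f : R -> R) x :
  (forall y z, y <= z -> f y <= f z) ->
  (forall eps, 0 < eps -> exists y, y < x /\ f x - eps < f y) ->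
  filterlim f (at_left x) (locally (f x)).
Proof.
  intros Hmono Happ P [eps HP].
  destruct (Happ eps (cond_pos eps)) as [y [Hyx Hfy]].
  assert (Hd : 0 < x - y) by lra.
  exists (mkposreal _ Hd); intros z Hz Hzx. apply HP.
  change (Rabs (z - x) < x - y) in Hz. change (Rabs (f z - f x) < eps).
  apply Rabs_def2 in Hz.
  assert (f y <= f z) by (apply Hmono; lra).
  assert (f z <= f x) by (apply Hmono; lra).
  apply Rabs_def1; lra.
Qed.

Lemma nondecreasing_at_right (f : R -> R) x :
  (forall y z, y <= z -> f y <= f z) ->
  (forall eps, 0 < eps -> exists y, x < y /\ f y < f x + eps) ->
  filterlim f (at_right x) (locally (f x)).
Proof.
  intros Hmono Happ P [eps HP].
  destruct (Happ eps (cond_pos eps)) as [y [Hxy Hfy]].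
  assert (Hd : 0 < y - x) by lra.
  exists (mkposreal _ Hd); intros z Hz Hxz. apply HP.
  change (Rabs (z - x) < y - x) in Hz. change (Rabs (f z - f x) < eps).
  apply Rabs_def2 in Hz.
  assert (f x <= f z) by (apply Hmono; lra).
  assert (f z <= f y) by (apply Hmono; lra).
  apply Rabs_def1; lra.
Qed.

Lemma at_left_le_within a b x : a < x <= b ->
  filter_le (at_left x) (within (fun y => a <= y <= b) (locally x)).
Proof.
  intros Hx P HP; unfold at_left, within in *.
  generalize (filter_and _ _ HP (open_gt a x (proj1 Hx))).
  apply filter_imp; intros y [Hy Hay] Hyx; apply Hy; lra.
Qed.

Lemma at_right_le_within a b x : a <= x < b ->
  filter_le (at_right x) (within (fun y => a <= y <= b) (locally x)).
Proof.
  intros Hx P HP; unfold at_right, within in *.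
  generalize (filter_and _ _ HP (open_lt b x (proj2 Hx))).
  apply filter_imp; intros y [Hy Hyb] Hxy; apply Hy; lra.
Qed.

Lemma is_derive_slope (f : R -> R) x l : is_derive f x l ->
  filterlim (fun y => (f y - f x) / (y - x)) (locally' x) (locally l).
Proof.
  rewrite is_derive_Reals; intros Hd P [eps HP].
  destruct (Hd eps (cond_pos eps)) as [del Hdel].
  exists del; intros y Hy Hyx. apply HP.
  specialize (Hdel (y - x)); rewrite Rplus_minus in Hdel.
  apply Hdel; [lra|exact Hy].
Qed.

Lemma continuous_on_reflect (D : R -> Prop) (f : R -> R) :
  continuous_on D f -> continuous_on (fun x => D (- x)) (fun x => f (- x)).
Proof.
  intros Hf x Dx P HP.
  exact (filterlim_opp x _ (Hf (- x) Dx P HP)).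
Qed.

(* By convexity [(G (x + t * (y - x)) - G x) / t <= G y - G x] for [0 < t < 1];
   let [t] tend to [0]. *)
Lemma convex_slope_le (G : R -> R) (D : R -> Prop) x y l : x <> y ->
  (forall t, 0 < t < 1 -> D (x + t * (y - x))) ->
  (forall t, 0 < t < 1 -> G (x + t * (y - x)) <= G x + t * (G y - G x)) ->
  filterlim (fun z => (G z - G x) / (z - x)) (within D (locally x)) (locally l) ->
  l * (y - x) <= G y - G x.
Proof.
  intros Hxy Hseg Hconv Hl.
  set (h t := x + t * (y - x)).
  assert (Hh : filterlim h (at_right 0) (within D (locally x))).
  { intros P HP.
    assert (Hc : filterlim h (locally 0) (locally (h 0))).
    { apply (ex_derive_continuous h); unfold h; auto_derive; trivial. }
    replace (h 0) with x in Hc by (unfold h; ring).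
    assert (Hnear : locally 0 (fun t => D (h t) -> P (h t))) by exact (Hc _ HP).
    generalize (filter_and _ _ Hnear (open_lt 1 0 Rlt_0_1)).
    unfold filtermap, at_right, within.
    apply filter_imp; intros t [Ht Ht1] Ht0; apply Ht, Hseg; lra. }
  assert (Hq := filterlim_comp _ _ _ _ _ _ _ _
                  (filterlim_comp _ _ _ _ _ _ _ _ Hh Hl) (filterlim_scal_r (y - x) l)).
  assert (Hle := closed_filterlim_loc _ (fun w => w <= G y - G x) _ Hq).
  unfold scal in Hle; simpl in Hle; unfold mult in Hle; simpl in Hle.
  rewrite Rmult_comm; apply Hle; [|apply closed_le].
  exists (mkposreal 1 Rlt_0_1); intros t Ht Ht0.
  change (Rabs (t - 0) < 1) in Ht; apply Rabs_def2 in Ht as [Ht1 _].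
  assert (Ht : 0 < t < 1) by lra.
  specialize (Hconv t Ht); fold (h t) in Hconv.
  assert (Hht : h t - x = t * (y - x)) by (unfold h; ring).
  unfold scal; simpl; unfold mult; simpl.
  rewrite Hht; replace ((y - x) * ((G (h t) - G x) / (t * (y - x))))
    with ((G (h t) - G x) / t) by (field; split; lra).
  apply Rmult_le_reg_r with t; [lra|].
  replace ((G (h t) - G x) / t * t) with (G (h t) - G x) by (field; lra); lra.
Qed.

Lemma subgradient_monotone (G g : R -> R) x y : x <= y ->
  g x * (y - x) <= G y - G x -> g y * (x - y) <= G x - G y -> g x <= g y.
Proof.
  intros Hxy Hx Hy. destruct (Req_dec x y) as [->|Hne]; [lra|].
  apply Rmult_le_reg_r with (y - x); nra.
Qed.

(* The first-order condition for maximising [mu * x - G x] over [a, b] when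
   [g] is the derivative of a convex [G]. *)
Definition best_response (a b : R) (g : R -> R) (mu x : R) : Prop :=
  a <= x <= b /\ (x = a \/ g x <= mu) /\ (x = b \/ mu <= g x).

Definition resp_lo (a b : R) (g : R -> R) (mu : R) : R :=
  real (Lub_Rbar (fun x => a <= x <= b /\ (x = a \/ g x < mu))).

Definition resp_hi (a b : R) (g : R -> R) (mu : R) : R :=
  real (Lub_Rbar (fun x => a <= x <= b /\ (x = a \/ g x <= mu))).

Section BestResponse.

Variables (a b : R) (g : R -> R).
Hypothesis a_le_b : a <= b.
Hypothesis g_mono : forall x y, a <= x -> x <= y -> y <= b -> g x <= g y.
Hypothesis g_cont : continuous_on (fun x => a <= x <= b) g.

Lemma resp_lo_lub mu :
  is_lub (fun x => a <= x <= b /\ (x = a \/ g x < mu)) (resp_lo a b g mu).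
Proof.
  apply (Lub_Rbar_is_lub _ a b); [split; [lra|now left]|intros x [Hx _]; lra].
Qed.

Lemma resp_hi_lub mu :
  is_lub (fun x => a <= x <= b /\ (x = a \/ g x <= mu)) (resp_hi a b g mu).
Proof.
  apply (Lub_Rbar_is_lub _ a b); [split; [lra|now left]|intros x [Hx _]; lra].
Qed.

Lemma resp_lo_range mu : a <= resp_lo a b g mu <= b.
Proof.
  destruct (resp_lo_lub mu) as [Hub Hleast]. split.
  - apply Hub; split; [lra|now left].
  - apply Hleast; intros x [Hx _]; lra.
Qed.

Lemma resp_hi_range mu : a <= resp_hi a b g mu <= b.
Proof.
  destruct (resp_hi_lub mu) as [Hub Hleast]. split.
  - apply Hub; split; [lra|now left].
  - apply Hleast; intros x [Hx _]; lra.
Qed.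

Lemma resp_lo_le_hi mu : resp_lo a b g mu <= resp_hi a b g mu.
Proof.
  apply (resp_lo_lub mu); intros x [Hx Hgx].
  apply (resp_hi_lub mu); split; [exact Hx|lra].
Qed.

Lemma resp_lo_mono mu nu : mu <= nu -> resp_lo a b g mu <= resp_lo a b g nu.
Proof.
  intros Hmu; apply (resp_lo_lub mu); intros x [Hx Hgx].
  apply (resp_lo_lub nu); split; [exact Hx|lra].
Qed.

Lemma resp_hi_mono mu nu : mu <= nu -> resp_hi a b g mu <= resp_hi a b g nu.
Proof.
  intros Hmu; apply (resp_hi_lub mu); intros x [Hx Hgx].
  apply (resp_hi_lub nu); split; [exact Hx|lra].
Qed.

Lemma resp_lo_le_best mu x : best_response a b g mu x -> resp_lo a b g mu <= x.
Proof.
  intros [Hx [_ Hxb]]; apply (resp_lo_lub mu); intros z [Hz Hgz].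
  destruct (Rle_lt_dec z x) as [|Hxz]; [assumption|exfalso].
  assert (g x <= g z) by (apply g_mono; lra).
  destruct Hxb, Hgz; lra.
Qed.

Lemma best_le_resp_hi mu x : best_response a b g mu x -> x <= resp_hi a b g mu.
Proof.
  intros [Hx [Hxa _]]; apply (resp_hi_lub mu); split; assumption.
Qed.

Lemma best_response_convex mu x y z :
  best_response a b g mu x -> best_response a b g mu z -> x <= y <= z ->
  best_response a b g mu y.
Proof.
  intros [Hx [_ Hxb]] [Hz [Hza _]] Hy. split; [lra|split].
  - destruct Hza as [->|Hgz]; [left; lra|right].
    apply Rle_trans with (g z); [apply g_mono|]; lra.
  - destruct Hxb as [->|Hgx]; [left; lra|right].
    apply Rle_trans with (g x); [|apply g_mono]; lra.
Qed.

Lemma le_of_left_bound x m : a < x <= b ->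
  (forall y, a < y < x -> g y <= m) -> g x <= m.
Proof.
  intros Hx Hm.
  apply (closed_filterlim_loc (F := at_left x) g (fun w => w <= m)).
  - exact (filterlim_filter_le_1 _ (at_left_le_within a b x Hx) (g_cont x ltac:(lra))).
  - generalize (open_gt a x (proj1 Hx)); unfold at_left, within.
    apply filter_imp; intros y Hay Hyx; apply Hm; lra.
  - apply closed_le.
Qed.

Lemma ge_of_right_bound x m : a <= x < b ->
  (forall y, x < y < b -> m <= g y) -> m <= g x.
Proof.
  intros Hx Hm.
  apply (closed_filterlim_loc (F := at_right x) g (fun w => m <= w)).
  - exact (filterlim_filter_le_1 _ (at_right_le_within a b x Hx) (g_cont x ltac:(lra))).
  - generalize (open_lt b x (proj2 Hx)); unfold at_right, within.
    apply filter_imp; intros y Hyb Hxy; apply Hm; lra.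
  - apply closed_ge.
Qed.

Lemma resp_lo_best mu : best_response a b g mu (resp_lo a b g mu).
Proof.
  pose proof (resp_lo_range mu) as Hr.
  split; [exact Hr|split].
  - destruct (Req_dec (resp_lo a b g mu) a) as [|Hne]; [now left|right].
    apply le_of_left_bound; [lra|]; intros y Hy.
    destruct (lub_approx _ _ y (resp_lo_lub mu)) as [z [[Hz Hgz] Hyz]]; [lra|].
    destruct Hgz as [->|Hgz]; [lra|].
    assert (g y <= g z) by (apply g_mono; lra). lra.
  - destruct (Req_dec (resp_lo a b g mu) b) as [|Hne]; [now left|right].
    apply ge_of_right_bound; [lra|]; intros y Hy.
    destruct (Rle_lt_dec mu (g y)) as [|Hgy]; [assumption|exfalso].
    assert (y <= resp_lo a b g mu) by (apply (resp_lo_lub mu); split; [lra|now right]). lra.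
Qed.

Lemma resp_hi_best mu : best_response a b g mu (resp_hi a b g mu).
Proof.
  pose proof (resp_hi_range mu) as Hr.
  split; [exact Hr|split].
  - destruct (Req_dec (resp_hi a b g mu) a) as [|Hne]; [now left|right].
    apply le_of_left_bound; [lra|]; intros y Hy.
    destruct (lub_approx _ _ y (resp_hi_lub mu)) as [z [[Hz Hgz] Hyz]]; [lra|].
    destruct Hgz as [->|Hgz]; [lra|].
    assert (g y <= g z) by (apply g_mono; lra). lra.
  - destruct (Req_dec (resp_hi a b g mu) b) as [|Hne]; [now left|right].
    apply ge_of_right_bound; [lra|]; intros y Hy.
    destruct (Rle_lt_dec (g y) mu) as [Hgy|]; [exfalso|lra].
    assert (y <= resp_hi a b g mu) by (apply (resp_hi_lub mu); split; [lra|now right]). lra.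
Qed.

Lemma resp_lo_at_left mu :
  filterlim (resp_lo a b g) (at_left mu) (locally (resp_lo a b g mu)).
Proof.
  apply nondecreasing_at_left; [exact resp_lo_mono|]; intros eps Heps.
  destruct (lub_approx _ _ (resp_lo a b g mu - eps) (resp_lo_lub mu))
    as [x [[Hx [->|Hgx]] Hlt]]; [lra| |].
  - exists (mu - 1); split; [lra|].
    pose proof (resp_lo_range (mu - 1)); lra.
  - exists ((g x + mu) / 2); split; [lra|].
    enough (x <= resp_lo a b g ((g x + mu) / 2)) by lra.
    apply (resp_lo_lub ((g x + mu) / 2)); split; [exact Hx|right; lra].
Qed.

Lemma resp_hi_at_right mu :
  filterlim (resp_hi a b g) (at_right mu) (locally (resp_hi a b g mu)).
Proof.
  apply nondecreasing_at_right; [exact resp_hi_mono|]; intros eps Heps.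
  pose proof (resp_hi_range mu) as Hr.
  set (y := resp_hi a b g mu + eps / 2).
  destruct (Rlt_le_dec b y) as [Hby|Hyb].
  - exists (mu + 1); split; [lra|].
    pose proof (resp_hi_range (mu + 1)); unfold y in *; lra.
  - assert (Hgy : mu < g y).
    { destruct (Rlt_le_dec mu (g y)) as [|Hgy]; [assumption|exfalso].
      assert (y <= resp_hi a b g mu)
        by (apply (resp_hi_lub mu); split; [unfold y in *; lra|now right]).
      unfold y in *; lra. }
    exists ((mu + g y) / 2); split; [lra|].
    enough (resp_hi a b g ((mu + g y) / 2) <= y) by (unfold y in *; lra).
    apply (resp_hi_lub ((mu + g y) / 2)); intros z [Hz [->|Hgz]]; [unfold y in *; lra|].
    destruct (Rle_lt_dec z y) as [|Hyz]; [assumption|exfalso].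
    assert (g y <= g z) by (apply g_mono; unfold y in *; lra). lra.
Qed.

End BestResponse.

Lemma convex_combination_zero p q : p <= 0 -> 0 <= q ->
  exists t, 0 <= t <= 1 /\ (1 - t) * p + t * q = 0.
Proof.
  intros Hp Hq. destruct (Req_dec p q) as [Hpq|Hpq].
  - exists 0; split; [lra|]. rewrite Hpq in *; lra.
  - exists (- p / (q - p)).
    assert (Hqp : 0 < q - p) by lra.
    assert (Ht : - p / (q - p) * (q - p) = - p) by (field; lra).
    split; [split|].
    + apply Rmult_le_reg_r with (q - p); [lra|]. rewrite Ht; lra.
    + apply Rmult_le_reg_r with (q - p); [lra|]. rewrite Ht; lra.
    + replace ((1 - - p / (q - p)) * p + - p / (q - p) * q)
        with (p + - p / (q - p) * (q - p)) by ring.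
      rewrite Ht; ring.
Qed.

Definition nondecreasing_continuous_on (a b : R) (g : R -> R) : Prop :=
  a <= b /\ (forall x y, a <= x -> x <= y -> y <= b -> g x <= g y) /\
  continuous_on (fun x => a <= x <= b) g.

Section Market.

Variables (n : nat) (a b : nat -> R) (g : nat -> R -> R).
Hypothesis agents_regular :
  forall k, (k < n)%nat -> nondecreasing_continuous_on (a k) (b k) (g k).

Let lo_sum mu := rsum n (fun k => resp_lo (a k) (b k) (g k) mu).
Let hi_sum mu := rsum n (fun k => resp_hi (a k) (b k) (g k) mu).

Lemma lo_sum_mono mu nu : mu <= nu -> lo_sum mu <= lo_sum nu.
Proof.
  intros; apply rsum_le; intros k Hk.
  apply resp_lo_mono; [apply agents_regular|]; auto.
Qed.

Lemma hi_sum_mono mu nu : mu <= nu -> hi_sum mu <= hi_sum nu.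
Proof.
  intros; apply rsum_le; intros k Hk.
  apply resp_hi_mono; [apply agents_regular|]; auto.
Qed.

Lemma lo_sum_le_hi_sum mu : lo_sum mu <= hi_sum mu.
Proof. apply rsum_le; intros k Hk; apply resp_lo_le_hi, agents_regular, Hk. Qed.

Lemma lo_sum_at_left mu : filterlim lo_sum (at_left mu) (locally (lo_sum mu)).
Proof.
  apply filterlim_rsum; intros k Hk.
  destruct (agents_regular k Hk) as (? & _ & _); apply resp_lo_at_left; auto.
Qed.

Lemma hi_sum_at_right mu : filterlim hi_sum (at_right mu) (locally (hi_sum mu)).
Proof.
  apply filterlim_rsum; intros k Hk.
  destruct (agents_regular k Hk) as (? & ? & _); apply resp_hi_at_right; auto.
Qed.

Theorem market_clearing_price mu1 mu2 x1 x2 : mu1 <= mu2 ->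
  (forall k, (k < n)%nat -> best_response (a k) (b k) (g k) mu1 (x1 k)) ->
  rsum n x1 <= 0 ->
  (forall k, (k < n)%nat -> best_response (a k) (b k) (g k) mu2 (x2 k)) ->
  0 <= rsum n x2 ->
  exists mu x, mu1 <= mu <= mu2 /\
    (forall k, (k < n)%nat -> best_response (a k) (b k) (g k) mu (x k)) /\
    rsum n x = 0.
Proof.
  intros Hmu Hx1 Hsum1 Hx2 Hsum2.
  set (E mu := mu1 <= mu <= mu2 /\ lo_sum mu <= 0).
  assert (HE1 : E mu1).
  { split; [lra|]. apply Rle_trans with (rsum n x1); [|exact Hsum1].
    apply rsum_le; intros k Hk.
    destruct (agents_regular k Hk) as (? & ? & ?); apply resp_lo_le_best; auto. }
  destruct (completeness E) as [ms Hms].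
  { exists mu2; intros mu [Hmu2 _]; lra. }
  { exists mu1; exact HE1. }
  assert (Hms12 : mu1 <= ms <= mu2).
  { split; [apply Hms, HE1|apply Hms; intros mu [Hmu2 _]; lra]. }
  assert (Hlo : lo_sum ms <= 0).
  { apply (closed_filterlim_loc _ (fun w => w <= 0) _ (lo_sum_at_left ms));
      [|apply closed_le].
    unfold at_left, within; apply filter_forall; intros nu Hnu.
    destruct (lub_approx E ms nu Hms Hnu) as [mu [[_ Hmu0] Hlt]].
    apply Rle_trans with (lo_sum mu); [apply lo_sum_mono; lra|exact Hmu0]. }
  assert (Hhi : 0 <= hi_sum ms).
  { apply (closed_filterlim_loc _ (fun w => 0 <= w) _ (hi_sum_at_right ms));
      [|apply closed_ge].
    unfold at_right, within; apply filter_forall; intros nu Hnu.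
    destruct (Rle_lt_dec nu mu2) as [Hnu2|Hnu2].
    - destruct (Rle_lt_dec (lo_sum nu) 0) as [Hnu0|Hnu0].
      + assert (nu <= ms) by (apply Hms; split; [lra|exact Hnu0]). lra.
      + pose proof (lo_sum_le_hi_sum nu); lra.
    - apply Rle_trans with (hi_sum mu2); [|apply hi_sum_mono; lra].
      apply Rle_trans with (rsum n x2); [exact Hsum2|].
      apply rsum_le; intros k Hk.
      apply best_le_resp_hi; [apply agents_regular|apply Hx2]; exact Hk. }
  destruct (convex_combination_zero _ _ Hlo Hhi) as [t [Ht Ht0]].
  exists ms, (fun k => (1 - t) * resp_lo (a k) (b k) (g k) ms
                       + t * resp_hi (a k) (b k) (g k) ms).
  split; [exact Hms12|split].
  - intros k Hk. destruct (agents_regular k Hk) as (Hab & Hmono & Hcont).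
    pose proof (resp_lo_le_hi (a k) (b k) (g k) Hab ms).
    apply best_response_convex with (resp_lo (a k) (b k) (g k) ms)
      (resp_hi (a k) (b k) (g k) ms); auto using resp_lo_best, resp_hi_best.
    split; nra.
  - rewrite rsum_plus, !rsum_scal; exact Ht0.
Qed.

End Market.

Lemma price_taker_optimal (G g : R -> R) b mu q :
  (forall y, y <= b -> g q * (y - q) <= G y - G q) -> g q <= mu -> (q = b \/ mu <= g q) ->
  forall y, y <= b -> mu * y - G y <= mu * q - G q.
Proof.
  intros Hgrad Hle Hq y Hy. specialize (Hgrad y Hy).
  destruct Hq as [->|Hge]; [nra|].
  replace mu with (g q) by lra; lra.
Qed.

Lemma consumer_optimal (U u : R -> R) d0 mu d :
  (forall x, d0 <= x -> U x - U d <= u d * (x - d)) -> u d <= mu -> (d = d0 \/ mu <= u d) ->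
  forall x, d0 <= x -> U x - mu * x <= U d - mu * d.
Proof.
  intros Hgrad Hle Hd x Hx.
  enough (mu * - x - - U (- - x) <= mu * - d - - U (- - d))
    by (rewrite !Ropp_involutive in *; lra).
  apply (price_taker_optimal (fun q => - U (- q)) (fun q => u (- q)) (- d0));
    rewrite ?Ropp_involutive.
  - intros y Hy; specialize (Hgrad (- y) ltac:(lra)); nra.
  - exact Hle.
  - destruct Hd; [left|right]; lra.
  - lra.
Qed.

Lemma welfare_le_of_price_taking M N d0 k0 mu (U C : nat -> R -> R) (d s : nat -> R) :
  (forall i, (i < M)%nat -> forall x, d0 <= x -> U i x - mu * x <= U i (d i) - mu * d i) ->
  (forall j, (j < N)%nat -> forall x, x <= k0 -> mu * x - C j x <= mu * s j - C j (s j)) ->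
  rsum M d = rsum N s ->
  forall d' s', feasible M N d0 k0 d' s' -> welfare M N U C d' s' <= welfare M N U C d s.
Proof.
  intros HU HC Hds d' s' [Hbal [Hs' Hd']]. unfold welfare.
  assert (HUsum : rsum M (fun i => U i (d' i) - mu * d' i)
                  <= rsum M (fun i => U i (d i) - mu * d i))
    by (apply rsum_le; intros i Hi; apply HU; [exact Hi|apply Hd', Hi]).
  assert (HCsum : rsum N (fun j => mu * s' j - C j (s' j))
                  <= rsum N (fun j => mu * s j - C j (s j)))
    by (apply rsum_le; intros j Hj; apply HC; [exact Hj|apply Hs', Hj]).
  rewrite !rsum_minus, !rsum_scal, Hbal, Hds in HUsum.
  rewrite !rsum_minus, !rsum_scal in HCsum. lra.
Qed.

Lemma segment_ne_start x y t : x <> y -> 0 < t -> x + t * (y - x) <> x.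
Proof.
  intros Hxy Ht E.
  apply (Rmult_integral_contrapositive_currified t (y - x)); lra.
Qed.

Definition supergradient_on (d0 : R) (U u : R -> R) : Prop :=
  forall x y, d0 <= x -> d0 <= y -> U y - U x <= u x * (y - x).

Definition subgradient (C c : R -> R) : Prop :=
  forall x y, c x * (y - x) <= C y - C x.

Lemma utility_marginal (U : R -> R) d0 :
  concave_on_Ici U d0 -> strict_incr_Ici U d0 -> C1_on_Ici U d0 ->
  exists u, continuous_on (fun x => d0 <= x) u /\ supergradient_on d0 U u /\
    (forall x, d0 <= x -> 0 < u x).
Proof.
  intros Hconc Hincr [u [Hslope Hcont]].
  assert (Hgrad : supergradient_on d0 U u).
  { intros x y Hx Hy. destruct (Req_dec x y) as [<-|Hxy]; [lra|].
    enough (- u x * (y - x) <= - U y - - U x) by lra.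
    apply (convex_slope_le (fun z => - U z) (fun z => d0 <= z /\ z <> x)); [exact Hxy| | |].
    - intros t Ht; split; [nra|apply segment_ne_start; lra].
    - intros t Ht. specialize (Hconc y x t Hy Hx ltac:(lra)).
      replace (t * y + (1 - t) * x) with (x + t * (y - x)) in Hconc by ring; lra.
    - eapply filterlim_ext;
        [|exact (filterlim_comp _ _ _ _ _ _ _ _ (Hslope x Hx) (filterlim_opp (u x)))].
      intros z; unfold opp; simpl; unfold Rdiv; ring. }
  exists u; split; [exact Hcont|split; [exact Hgrad|]].
  intros x Hx. pose proof (Hincr x (x + 1) Hx ltac:(lra)).
  pose proof (Hgrad x (x + 1) Hx ltac:(lra)); lra.
Qed.

Lemma cost_marginal (C : R -> R) :
  convex_R C -> C1_R C -> (forall s, s <= 0 -> C s = 0) ->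
  exists c, (forall x, continuous c x) /\ subgradient C c /\ c 0 = 0.
Proof.
  intros Hconv [c [Hder Hcont]] Hflat.
  assert (Hgrad : subgradient C c).
  { intros x y. destruct (Req_dec x y) as [<-|Hxy]; [lra|].
    apply (convex_slope_le C (fun z => z <> x));
      [exact Hxy| | |exact (is_derive_slope C x (c x) (Hder x))].
    - intros t Ht; apply segment_ne_start; lra.
    - intros t Ht. specialize (Hconv y x t ltac:(lra)).
      replace (t * y + (1 - t) * x) with (x + t * (y - x)) in Hconv by ring; lra. }
  exists c; split; [exact Hcont|split; [exact Hgrad|]].
  apply Rle_antisym.
  - apply (closed_filterlim_loc (F := at_left 0) c (fun w => w <= 0));
      [exact (filterlim_filter_le_1 _ (filter_le_within _) (Hcont 0))| |apply closed_le].
    unfold at_left, within; apply filter_forall; intros y Hy.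
    specialize (Hgrad y 0); rewrite !Hflat in Hgrad by lra; nra.
  - specialize (Hgrad 0 (-1)); rewrite !Hflat in Hgrad by lra; lra.
Qed.

Definition glue {A : Type} (M : nat) (f h : nat -> A) (k : nat) : A :=
  if (k <? M)%nat then f k else h (k - M)%nat.

Lemma glue_l {A : Type} M (f h : nat -> A) i : (i < M)%nat -> glue M f h i = f i.
Proof. intros Hi; unfold glue; rewrite (proj2 (Nat.ltb_lt i M) Hi); reflexivity. Qed.

Lemma glue_r {A : Type} M (f h : nat -> A) j : glue M f h (M + j) = h j.
Proof.
  unfold glue; rewrite (proj2 (Nat.ltb_ge (M + j) M)) by lia.
  f_equal; lia.
Qed.

Lemma forall_lt_add M N (P : nat -> Prop) :
  (forall i, (i < M)%nat -> P i) -> (forall j, (j < N)%nat -> P (M + j)%nat) ->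
  forall k, (k < M + N)%nat -> P k.
Proof.
  intros HM HN k Hk. destruct (Nat.lt_ge_cases k M) as [|Hk']; [auto|].
  replace k with (M + (k - M))%nat by lia; apply HN; lia.
Qed.

Section Economy.

Variables (M N : nat) (d0 k0 : R) (U C u c : nat -> R -> R).
Hypothesis M_pos : (0 < M)%nat.
Hypothesis d0_pos : 0 < d0.
Hypothesis k0_pos : 0 < k0.
Hypothesis enough_capacity : INR M * d0 < INR N * k0.
Hypothesis consumers : forall i, (i < M)%nat ->
  continuous_on (fun x => d0 <= x) (u i) /\ supergradient_on d0 (U i) (u i) /\
  (forall x, d0 <= x -> 0 < u i x).
Hypothesis suppliers : forall j, (j < N)%nat ->
  (forall x, continuous (c j) x) /\ subgradient (C j) (c j) /\ c j 0 = 0.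

(* Consumer [i] is the agent supplying [-d] at marginal cost [u i d].  Capping
   its demand at [X], which exceeds the total capacity, is harmless at prices
   above every [u i X]. *)
Let X := d0 + INR N * k0.
Let a := glue M (fun _ => - X) (fun _ => 0).
Let b := glue M (fun _ => - d0) (fun _ => k0).
Let g := glue M (fun i q => u i (- q)) c.

Lemma agents_regular k : (k < M + N)%nat -> nondecreasing_continuous_on (a k) (b k) (g k).
Proof.
  revert k; apply forall_lt_add; intros i Hi; unfold a, b, g;
    [rewrite !glue_l by exact Hi|rewrite !glue_r].
  - destruct (consumers i Hi) as (Hcont & Hgrad & _).
    assert (0 <= INR N * k0) by (apply Rmult_le_pos; [apply pos_INR|lra]).
    split; [unfold X; lra|split].
    + intros x y Hx Hxy Hy. enough (- u i (- y) <= - u i (- x)) by lra.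
      apply (subgradient_monotone (fun z => - U i z) (fun z => - u i z)); [lra| |];
        [specialize (Hgrad (- y) (- x))|specialize (Hgrad (- x) (- y))]; nra.
    + apply (continuous_on_subset (fun q => d0 <= - q)); [intros; lra|].
      exact (continuous_on_reflect _ _ Hcont).
  - destruct (suppliers i Hi) as (Hcont & Hgrad & _).
    split; [lra|split].
    + intros x y _ Hxy _. apply (subgradient_monotone (C i)); auto.
    + apply continuous_on_forall; intros; apply Hcont.
Qed.

Lemma rsum_capacity : rsum (M + N) b = INR N * k0 - INR M * d0.
Proof.
  rewrite rsum_split, (rsum_ext M _ (fun _ => - d0)), (rsum_ext N _ (fun _ => k0)).
  - rewrite !rsum_const; ring.
  - intros j _; apply glue_r.
  - intros i Hi; exact (glue_l M _ _ i Hi).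
Qed.

(* At the largest of the prices [u i X], the consumer attaining it demands [X]. *)
Lemma shortage_at_low_price : exists mu1, 0 < mu1 /\
  (forall i, (i < M)%nat -> u i X <= mu1) /\
  rsum (M + N) (fun k => resp_lo (a k) (b k) (g k) mu1) <= 0.
Proof.
  destruct (exists_argmax M (fun i => u i X) M_pos) as [i0 [Hi0 Hmax]].
  assert (0 <= INR N * k0) by (apply Rmult_le_pos; [apply pos_INR|lra]).
  exists (u i0 X).
  split; [apply consumers; [exact Hi0|unfold X; lra]|split; [exact Hmax|]].
  rewrite rsum_split.
  assert (Hcons : rsum M (fun k => resp_lo (a k) (b k) (g k) (u i0 X)) <= - X).
  { apply Rle_trans with (resp_lo (a i0) (b i0) (g i0) (u i0 X)).
    - apply (rsum_le_term M (fun k => resp_lo (a k) (b k) (g k) (u i0 X)));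
        [intros i Hi|exact Hi0].
      destruct (agents_regular i ltac:(lia)) as [Hab _].
      pose proof (resp_lo_range _ _ (g i) Hab (u i0 X)).
      unfold b in *; rewrite glue_l in * by exact Hi; lra.
    - destruct (agents_regular i0 ltac:(lia)) as (Hab & Hmono & _).
      apply resp_lo_le_best; [exact Hab|exact Hmono|].
      unfold a, b, g in *; rewrite !glue_l in * by exact Hi0.
      split; [lra|split; [now left|right; rewrite Ropp_involutive; lra]]. }
  assert (Hsupp : rsum N (fun j => resp_lo (a (M + j)%nat) (b (M + j)%nat)
                                    (g (M + j)%nat) (u i0 X)) <= INR N * k0).
  { rewrite <- rsum_const; apply rsum_le; intros j Hj.
    destruct (agents_regular (M + j)%nat ltac:(lia)) as [Hab _].
    pose proof (resp_lo_range _ _ (g (M + j)%nat) Hab (u i0 X)).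
    unfold b in *; rewrite glue_r in *; lra. }
  assert (HX : X = d0 + INR N * k0) by reflexivity; lra.
Qed.

Lemma surplus_at_high_price mu1 : exists mu2, mu1 <= mu2 /\
  forall k, (k < M + N)%nat -> best_response (a k) (b k) (g k) mu2 (b k).
Proof.
  destruct (exists_argmax (M + N) (fun k => g k (b k))) as [k2 [_ Hk2]]; [lia|].
  exists (Rmax mu1 (g k2 (b k2))); split; [apply Rmax_l|].
  intros k Hk. destruct (agents_regular k Hk) as [Hab _].
  split; [lra|split; [right|now left]].
  apply Rle_trans with (g k2 (b k2)); [exact (Hk2 k Hk)|apply Rmax_r].
Qed.

Lemma competitive_equilibrium_exists : exists mu d s, 0 < mu /\ rsum M d = rsum N s /\
  (forall i, (i < M)%nat -> d0 <= d i /\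
     forall x, d0 <= x -> U i x - mu * x <= U i (d i) - mu * d i) /\
  (forall j, (j < N)%nat -> 0 <= s j <= k0 /\
     forall x, x <= k0 -> mu * x - C j x <= mu * s j - C j (s j)).
Proof.
  destruct shortage_at_low_price as [mu1 [Hmu1 [HuX Hshort]]].
  destruct (surplus_at_high_price mu1) as [mu2 [H12 Hbest2]].
  destruct (market_clearing_price (M + N) a b g agents_regular mu1 mu2
              (fun k => resp_lo (a k) (b k) (g k) mu1) b H12)
    as [mu [x [Hmu [Hbest Hclear]]]];
    [|exact Hshort|exact Hbest2|rewrite rsum_capacity; lra|].
  { intros k Hk; destruct (agents_regular k Hk) as (? & ? & ?).
    apply resp_lo_best; auto. }
  exists mu, (fun i => - x i), (fun j => x (M + j)%nat).
  split; [lra|split; [|split]].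
  - rewrite rsum_split in Hclear; rewrite rsum_opp; lra.
  - intros i Hi. destruct (consumers i Hi) as (_ & Hgrad & _).
    specialize (Hbest i ltac:(lia)); unfold a, b, g in Hbest.
    rewrite !glue_l in Hbest by exact Hi.
    destruct Hbest as [Hx [Hxa Hxb]].
    assert (Hle : u i (- x i) <= mu).
    { destruct Hxa as [->|]; [|assumption].
      rewrite Ropp_involutive; specialize (HuX i Hi); lra. }
    split; [lra|]. apply (consumer_optimal (U i) (u i)); [|exact Hle|].
    + intros y Hy; apply Hgrad; lra.
    + destruct Hxb; [left|right]; lra.
  - intros j Hj. destruct (suppliers j Hj) as (_ & Hgrad & Hc0).
    specialize (Hbest (M + j)%nat ltac:(lia)); unfold a, b, g in Hbest.
    rewrite !glue_r in Hbest.
    destruct Hbest as [Hx [Hxa Hxb]].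
    split; [exact Hx|].
    apply (price_taker_optimal (C j) (c j)); [intros; apply Hgrad| |exact Hxb].
    destruct Hxa as [->|]; [rewrite Hc0; lra|assumption].
Qed.

End Economy.

Lemma Dem_bid d0 mu d : 0 < mu -> Dem d0 (mu * (d - d0)) mu = d.
Proof. intros; unfold Dem; field; lra. Qed.

Lemma Sup_offer k0 mu s : 0 < mu -> Sup k0 (mu * (k0 - s)) mu = s.
Proof. intros; unfold Sup; field; lra. Qed.

Lemma pay_d_optimal d0 (U : R -> R) mu d : 0 < mu ->
  (forall x, d0 <= x -> U x - mu * x <= U d - mu * d) ->
  forall th, 0 <= th -> pay_d d0 U th mu <= pay_d d0 U (mu * (d - d0)) mu.
Proof.
  intros Hmu Hopt th Hth. unfold pay_d; rewrite Dem_bid by exact Hmu.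
  apply Hopt; unfold Dem.
  assert (0 <= th / mu) by (apply Rdiv_le_0_compat; lra); lra.
Qed.

Lemma pay_s_optimal k0 (C : R -> R) mu s : 0 < mu ->
  (forall x, x <= k0 -> mu * x - C x <= mu * s - C s) ->
  forall th, 0 <= th -> pay_s k0 C th mu <= pay_s k0 C (mu * (k0 - s)) mu.
Proof.
  intros Hmu Hopt th Hth. unfold pay_s; rewrite Sup_offer by exact Hmu.
  apply Hopt; unfold Sup.
  assert (0 <= th / mu) by (apply Rdiv_le_0_compat; lra); lra.
Qed.

Theorem theorem1 (M N : nat) (d0 k0 : R) (U C : nat -> R -> R) :
  (0 < M)%nat -> (0 < N)%nat ->
  0 < d0 -> 0 < k0 -> INR M * d0 < INR N * k0 ->
  (forall i, (i < M)%nat ->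
     concave_on_Ici (U i) d0 /\ strict_incr_Ici (U i) d0 /\
     C1_on_Ici (U i) d0 /\ U i d0 = 0) ->
  (forall i, (i < N)%nat ->
     convex_R (C i) /\ strict_incr_Ici (C i) 0 /\ C1_R (C i) /\
     (forall s, 0 <= s -> 0 <= C i s) /\ (forall s, s <= 0 -> C i s = 0)) ->
  exists (thd ths : nat -> R) (mu : R),
    0 < mu /\
    (forall i, (i < M)%nat -> 0 <= thd i) /\
    (forall i, (i < N)%nat -> 0 <= ths i) /\
    (forall i, (i < M)%nat -> forall th, 0 <= th ->
        pay_d d0 (U i) th mu <= pay_d d0 (U i) (thd i) mu) /\
    (forall i, (i < N)%nat -> forall th, 0 <= th ->
        pay_s k0 (C i) th mu <= pay_s k0 (C i) (ths i) mu) /\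
    mu = (rsum M thd + rsum N ths) / (INR N * k0 - INR M * d0) /\
    (let dstar := fun i => Dem d0 (thd i) mu in
     let sstar := fun i => Sup k0 (ths i) mu in
     feasible M N d0 k0 dstar sstar /\
     forall d s, feasible M N d0 k0 d s ->
       welfare M N U C d s <= welfare M N U C dstar sstar).
Proof.
  intros HM _ Hd0 Hk0 Hcap HU HC.
  destruct (finite_choice M (fun i u => continuous_on (fun x => d0 <= x) u /\
              supergradient_on d0 (U i) u /\ (forall x, d0 <= x -> 0 < u x)))
    as [u Hu]; [exact (inhabits (fun x => x))| |].
  { intros i Hi; destruct (HU i Hi) as (Hconc & Hincr & HC1 & _).
    exact (utility_marginal (U i) d0 Hconc Hincr HC1). }
  destruct (finite_choice N (fun j c => (forall x, continuous c x) /\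
              subgradient (C j) c /\ c 0 = 0))
    as [c Hc]; [exact (inhabits (fun x => x))| |].
  { intros j Hj; destruct (HC j Hj) as (Hconv & _ & HC1 & _ & Hflat).
    exact (cost_marginal (C j) Hconv HC1 Hflat). }
  destruct (competitive_equilibrium_exists M N d0 k0 U C u c HM Hd0 Hk0 Hcap Hu Hc)
    as (mu & d & s & Hmu & Hclear & Hd & Hs).
  exists (fun i => mu * (d i - d0)), (fun j => mu * (k0 - s j)), mu.
  split; [exact Hmu|split; [|split; [|split; [|split; [|split]]]]].
  - intros i Hi; destruct (Hd i Hi); nra.
  - intros j Hj; destruct (Hs j Hj) as [[? ?] _]; nra.
  - intros i Hi; apply pay_d_optimal; [exact Hmu|apply Hd, Hi].
  - intros j Hj; apply pay_s_optimal; [exact Hmu|apply Hs, Hj].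
  - rewrite !rsum_scal, !rsum_minus, !rsum_const, Hclear; field; lra.
  - intros dstar sstar.
    assert (Hdstar : forall i, dstar i = d i) by (intros; apply Dem_bid, Hmu).
    assert (Hsstar : forall j, sstar j = s j) by (intros; apply Sup_offer, Hmu).
    assert (Hbal : rsum M dstar = rsum N sstar)
      by (rewrite (rsum_ext M dstar d), (rsum_ext N sstar s); auto).
    split; [split; [exact Hbal|split]|].
    + intros j Hj; rewrite Hsstar; apply Hs, Hj.
    + intros i Hi; rewrite Hdstar; apply Hd, Hi.
    + apply (welfare_le_of_price_taking M N d0 k0 mu); [| |exact Hbal].
      * intros i Hi; rewrite Hdstar; apply Hd, Hi.
      * intros j Hj; rewrite Hsstar; apply Hs, Hj.
Qed.
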